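(* Both the randomized and the deterministic query complexity of $TARSKI(2,k)$ are $\Theta(k)$; that is, there are constants $0<c_1\le c_2$ such that for every $k\in\mathbb{N}$, each of these complexities lies between $c_1 k$ and $c_2 k$.
   Context: $TARSKI(2,k)$: given oracle access to an unknown monotone function $f:\{0,1\}^k\to\{0,1\}^k$ (monotone with respect to the componentwise order: $a\le b$ iff $a_i\le b_i$ for all $i$, implies $f(a)\le f(b)$), where a query of $v$ returns $f(v)$, find $x$ with $f(x)=x$. The deterministic query complexity is the minimum over deterministic algorithms always finding a fixed point of the worst-case number of queries. The randomized query complexity is the minimum, over randomized algorithms that on every input output a fixed point with probability at least $9/10$, of the worst-case expected number of queries (expectation over the algorithm's coins). *)

From HB Require Import structures.
From mathcomp Require Import all_boot all_order all_algebra.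
From Stdlib Require Import Rdefinitions.
From mathcomp Require Import Rstruct.
Notation R := Rdefinitions.R.
Set Implicit Arguments. Unset Strict Implicit. Unset Printing Implicit Defensive.
Import Order.TTheory GRing.Theory Num.Theory.
Local Open Scope ring_scope.

Definition point (k : nat) := {ffun 'I_k -> bool}.

Definition le_pt (k : nat) (a b : point k) : bool := [forall i, a i ==> b i].

Definition monotone_map (k : nat) (f : point k -> point k) : Prop :=
  forall a b : point k, le_pt a b -> le_pt (f a) (f b).

Definition is_fixed_point (k : nat) (f : point k -> point k) (x : point k) : bool :=
  f x == x.

(* Deterministic query algorithms = (adaptive) decision trees: an inner node
   queries v and continues according to the answer f(v); a leaf outputs a point. *)
Inductive dtree (k : nat) : Type :=
  | Leaf of point k
  | Node of point k & (point k -> dtree k).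

Fixpoint run (k : nat) (t : dtree k) (f : point k -> point k) : point k :=
  match t with
  | Leaf x => x
  | Node v ch => run (ch (f v)) f
  end.

Fixpoint nqueries (k : nat) (t : dtree k) (f : point k -> point k) : nat :=
  match t with
  | Leaf _ => 0%N
  | Node v ch => (nqueries (ch (f v)) f).+1
  end.

Definition det_solves (k : nat) (t : dtree k) : Prop :=
  forall f, monotone_map f -> is_fixed_point f (run t f).

(* Randomized algorithms: probability distributions over deterministic trees
   (finite support; weights are real numbers). *)
Notation rand_alg k := (seq (R * dtree k)%type).

Definition is_distribution (k : nat) (A : rand_alg k) : Prop :=
  all (fun p => 0 <= p.1) A /\ \sum_(p <- A) p.1 = 1.

Definition success_prob (k : nat) (A : rand_alg k) (f : point k -> point k) : R :=
  \sum_(p <- A) p.1 * (is_fixed_point f (run p.2 f))%:R.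

Definition expected_queries (k : nat) (A : rand_alg k) (f : point k -> point k) : R :=
  \sum_(p <- A) p.1 * (nqueries p.2 f)%:R.

Definition rand_solves (k : nat) (A : rand_alg k) : Prop :=
  is_distribution A /\
  forall f, monotone_map f -> 9 / 10 <= success_prob A f.

From HB Require Import structures.
From mathcomp Require Import all_boot all_order all_algebra.
From Stdlib Require Import Rdefinitions.
From mathcomp Require Import Rstruct.
From mathcomp Require Import zify lra.
Import Order.TTheory GRing.Theory Num.Theory.
Set Implicit Arguments. Unset Strict Implicit. Unset Printing Implicit Defensive.

(* Upper bound: Kleene iteration from the bottom point strictly increases the
   number of ones until it stops at a fixed point, so it makes at most k queries.

   Lower bound: the monotone map [hard_map s] has the secret s as its unique
   fixed point, and a query at v reveals s only up to the first coordinate where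
   v and s differ.  For a uniformly random s in a subcube with a known prefix,
   that coordinate lies on average two places beyond the prefix.  Hence every
   decision tree has average (over s) potential 2 (queries) + (k+1) [wrong
   output] at least k, and averaging over the trees of a randomized algorithm
   that succeeds with probability 9/10 leaves an input on which it makes at
   least k/4 queries in expectation. *)

Section Subcubes.
Variable k : nat.
Implicit Types (a b c p s : point k) (n : nat).

Definition agree_below a b n : bool :=
  [forall j : 'I_k, (j < n) ==> (a j == b j)].

Lemma agree_belowP a b n :
  reflect (forall j : 'I_k, j < n -> a j = b j) (agree_below a b n).
Proof.
apply: (iffP forallP) => H j; first by move=> /(implyP (H j)) /eqP.
by apply/implyP => /H ->.
Qed.

Lemma agree_below_eq a b n (j : 'I_k) : agree_below a b n -> j < n -> a j = b j.
Proof. by move=> /agree_belowP; apply. Qed.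

Lemma agree_below0 a b : agree_below a b 0.
Proof. by apply/agree_belowP. Qed.

Lemma agree_below_le a b n n' : n <= n' -> agree_below a b n' -> agree_below a b n.
Proof.
by move=> le_nn' H; apply/agree_belowP => j lt_jn; apply: (agree_below_eq H); lia.
Qed.

Lemma agree_belowC a b n : agree_below a b n = agree_below b a n.
Proof.
by apply/idP/idP => H; apply/agree_belowP => j lt_jn; rewrite (agree_below_eq H).
Qed.

Lemma agree_below_trans a b c n :
  agree_below a b n -> agree_below b c n -> agree_below a c n.
Proof.
move=> Hab Hbc; apply/agree_belowP => j lt_jn.
by rewrite (agree_below_eq Hab) ?(agree_below_eq Hbc).
Qed.

Lemma agree_belowS a b (j : 'I_k) :
  agree_below a b j.+1 = agree_below a b j && (a j == b j).
Proof.
apply/idP/andP => [H | [H /eqP E]].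
  by split; [apply: agree_below_le H | rewrite (agree_below_eq H (ltnSn j))].
apply/agree_belowP => i; rewrite ltnS leq_eqVlt => /orP [/eqP/val_inj -> //|].
exact: agree_below_eq.
Qed.

Lemma agree_below_all a b : agree_below a b k = (a == b).
Proof.
apply/idP/eqP => [H | ->]; last by apply/agree_belowP.
by apply/ffunP => j; apply: (agree_below_eq H).
Qed.

Lemma agree_below_first_diff a b n : ~~ agree_below a b n ->
  exists j : 'I_k, [&& j < n, agree_below a b j & a j != b j].
Proof.
elim: n => [|n IH]; first by rewrite agree_below0.
case Hn: (agree_below a b n); last first.
  move=> _; have [j /and3P [lt_jn Hj ne_j]] := IH (negbT Hn).
  by exists j; rewrite Hj ne_j ltnS ltnW.
move=> /forallPn [j]; rewrite negb_imply => /andP [lt_jn ne_j].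
exists j; rewrite lt_jn ne_j andbT.
case: (ltngtP j n) => [lt_jn' | | ->] //; last by lia.
by rewrite (agree_below_eq Hn lt_jn') eqxx in ne_j.
Qed.

Definition flip p (j : 'I_k) : point k := [ffun i => if i == j then ~~ p j else p i].

Lemma agree_below_flip p (j : 'I_k) s :
  agree_below s (flip p j) j = agree_below s p j.
Proof.
apply/idP/idP => H; apply/agree_belowP => i lt_ij; rewrite (agree_below_eq H lt_ij) ffunE;
  by have /negbTE -> : i != j by apply/eqP => E; rewrite E ltnn in lt_ij.
Qed.

Lemma big_agree_below_split p (j : 'I_k) (F : point k -> nat) :
  \sum_(s | agree_below s p j) F s =
  \sum_(s | agree_below s p j.+1) F s + \sum_(s | agree_below s (flip p j) j.+1) F s.
Proof.
rewrite (bigID (fun s : point k => s j == p j)) /=.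
congr (_ + _); apply: eq_bigl => s; rewrite agree_belowS //.
by rewrite agree_below_flip ffunE eqxx; case: (s j); case: (p j).
Qed.

Lemma sum_agree_below_const p n w : n <= k ->
  \sum_(s | agree_below s p n) w = w * expn 2 (k - n).
Proof.
move Ed: (k - n) => d; elim: d n p Ed => [|d IH] n p Ed le_nk.
  have -> : n = k by lia.
  rewrite (eq_bigl (pred1 p)) ?big_pred1_eq ?muln1 // => s.
  by rewrite agree_below_all.
have lt_nk : n < k by lia.
rewrite (big_agree_below_split p (Ordinal lt_nk)) /= !IH ?expnS; lia.
Qed.

End Subcubes.

Lemma le_ptP k (a b : point k) : reflect (forall i : 'I_k, a i -> b i) (le_pt a b).
Proof. by apply: (iffP forallP) => H i; [apply/implyP | apply/implyP/H]. Qed.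

Section HardMap.
Variable k : nat.
Implicit Types (s t v w x : point k).

Definition above_at_first_diff v s (i : nat) : bool :=
  [exists j : 'I_k, [&& j < i, agree_below v s j, v j & ~~ s j]].

(* [hard_map s v] copies [s] up to and including the first coordinate where [v]
   and [s] differ, and is constantly [v j] after that coordinate [j]. *)
Definition hard_map s v : point k :=
  [ffun i : 'I_k => above_at_first_diff v s i || (agree_below v s i && s i)].

Lemma hard_map_monotone s : monotone_map (hard_map s).
Proof.
move=> v w /le_ptP le_vw; apply/le_ptP => i; rewrite !ffunE.
have above_w n : n <= i -> agree_below v s n -> ~~ agree_below w s n ->
    above_at_first_diff w s i.
  move=> le_ni Hv /agree_below_first_diff [j /and3P [lt_jn Hw ne_j]].
  apply/existsP; exists j; rewrite Hw (leq_trans lt_jn le_ni) /=.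
  have := agree_below_eq Hv lt_jn; have := le_vw j.
  by move: ne_j; case: (w j); case: (v j); case: (s j) => // _ H; have := H isT.
case/orP => [/existsP [j /and4P [lt_ji Hv vj sj]] | /andP [Hv si]].
  case Hw: (agree_below w s j); last by rewrite (above_w j) ?Hw // ltnW.
  by apply/orP; left; apply/existsP; exists j; rewrite lt_ji Hw sj le_vw.
case Hw: (agree_below w s i); first by rewrite si orbT.
by rewrite (above_w i) ?Hw.
Qed.

Lemma hard_map_fixed s x : is_fixed_point (hard_map s) x -> x = s.
Proof.
move=> /eqP fix_x; apply/eqP; rewrite -agree_below_all.
suff agree_x n : agree_below x s n by [].
elim: n => [|n IH]; first exact: agree_below0.
apply/agree_belowP => j; rewrite ltnS leq_eqVlt => /orP [/eqP jn|]; last first.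
  exact: agree_below_eq.
rewrite -fix_x ffunE jn IH andTb.
suff -> : above_at_first_diff x s n = false by [].
apply/negbTE/existsPn => i; apply/negP => /and4P [lt_in _ xi si].
by move: (agree_below_eq IH lt_in) xi si => ->; case: (s i).
Qed.

Lemma hard_map_prefix s t v (j : 'I_k) :
  agree_below s v j -> s j != v j -> agree_below s t j.+1 ->
  hard_map s v = hard_map t v.
Proof.
move=> Hsv ne_j Hst.
have agree_le n : agree_below v s n -> n <= j.
  move=> H; rewrite leqNgt; apply/negP => lt_jn.
  by rewrite (agree_below_eq H lt_jn) eqxx in ne_j.
have Es (i : 'I_k) : i <= j -> s i = t i.
  by move=> le_ij; apply: (agree_below_eq Hst).
have agree_s n : agree_below v s n = agree_below v t n.
  case: (leqP n j) => le_nj.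
    by apply/idP/idP => H; apply/agree_belowP => i lt_in;
      rewrite (agree_below_eq H lt_in) ?Es //; lia.
  apply/idP/idP => [/agree_le | H]; first by lia.
  by move: (agree_below_eq H le_nj); rewrite -Es // => E; rewrite E eqxx in ne_j.
apply/ffunP => i; rewrite !ffunE agree_s.
have -> : above_at_first_diff v s i = above_at_first_diff v t i.
  apply: eq_existsb => j'; rewrite agree_s.
  case Hp: (agree_below v t j'); last by rewrite !andbF.
  by rewrite Es //; apply: agree_le; rewrite agree_s.
case Hp: (agree_below v t i) => //=.
by rewrite Es //; apply: agree_le; rewrite agree_s.
Qed.

End HardMap.

Lemma sum_const_le_sum_neq (T : finType) (P : pred T) x w :
  \sum_(s | P s) w <= \sum_(s | P s) w * (s != x) + w.
Proof.
rewrite (bigID (pred1 x)) addnC leq_add //=; last first.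
  by rewrite big_mkcondr; apply: leq_sum => s _; case: (s != x); rewrite ?muln1.
case Px: (P x).
  by rewrite (big_pred1 x) // => s /=; case: eqP => [->|]; rewrite ?Px ?andbF.
by rewrite big_pred0 // => s; case: eqP => [->|]; rewrite ?Px ?andbF.
Qed.

Section DecisionTreeLowerBound.
Variable k : nat.
Implicit Types (p s v x : point k) (t : dtree k) (m : nat).

Definition fails t s : bool := ~~ is_fixed_point (hard_map s) (run t (hard_map s)).

(* A query reveals two coordinates of a uniform secret on average; a wrong
   output is charged more than the at most [k] coordinates it leaves unknown. *)
Definition cost t s : nat := 2 * nqueries t (hard_map s) + k.+1 * fails t s.

Definition cost_lower_bound t : Prop := forall p m, m <= k ->
  (k - m) * expn 2 (k - m) <= \sum_(s | agree_below s p m) cost t s.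

Lemma cost_lower_bound_leaf x : cost_lower_bound (Leaf x).
Proof.
move=> p m le_mk; set d := k - m.
have cost_leaf s : k.+1 * (s != x) <= cost (Leaf x) s.
  rewrite /cost /fails /=; case fix_x: (is_fixed_point _ x).
    by rewrite (hard_map_fixed fix_x) eqxx.
  by case: (s != x); rewrite ?muln0 ?muln1.
have sum_ne :
    k.+1 * expn 2 d <= \sum_(s | agree_below s p m) k.+1 * (s != x) + k.+1.
  rewrite -(sum_agree_below_const p) //.
  by apply: leq_trans (sum_const_le_sum_neq _ x _) _; rewrite leq_add2r.
have lt_d : d < expn 2 d := ltn_expl d (ltnSn 1).
have sum_leaf : \sum_(s | agree_below s p m) k.+1 * (s != x) <=
    \sum_(s | agree_below s p m) cost (Leaf x) s.
  by apply: leq_sum => s _; apply: cost_leaf.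
have le_dk : d <= k by lia.
move: sum_ne sum_leaf; set S := \sum_(s | _) _; set C := \sum_(s | _) _.
move: lt_d le_dk; set X := expn 2 d; nia.
Qed.

Lemma cost_node_informative v (ch : point k -> dtree k) :
  (forall y, cost_lower_bound (ch y)) -> forall m, m <= k ->
  (k - m) * expn 2 (k - m) <= \sum_(s | agree_below s v m) cost (Node v ch) s.
Proof.
move=> IH m; move Ed: (k - m) => d; elim: d m Ed => [|d IHd] m Ed le_mk.
  by rewrite mul0n.
have lt_mk : m < k by lia.
set j := Ordinal lt_mk; set q := flip v j.
rewrite (big_agree_below_split v j) /=.
have answer_q s : agree_below s q m.+1 -> hard_map s v = hard_map q v.
  move=> Hs; apply: (@hard_map_prefix _ _ _ _ j) => //=.
  - by rewrite -(agree_below_flip v j); apply: agree_below_le (leqnSn _) Hs.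
  - by rewrite (@agree_below_eq _ _ _ _ j Hs (ltnSn m)) ffunE eqxx; case: (v j).
have sum_q : \sum_(s | agree_below s q m.+1) cost (Node v ch) s =
    2 * expn 2 d + \sum_(s | agree_below s q m.+1) cost (ch (hard_map q v)) s.
  have -> : d = k - m.+1 by lia.
  rewrite -(sum_agree_below_const q 2 lt_mk) -big_split /=.
  by apply: eq_bigr => s Hs; rewrite /cost /fails /= (answer_q s Hs) mulnS addnA.
have := IHd m.+1 ltac:(lia) lt_mk.
have := IH (hard_map q v) q m.+1 lt_mk.
have -> : k - m.+1 = d by lia.
rewrite sum_q expnS.
set A := \sum_(s | _) _; set B := \sum_(s | _) _; nia.
Qed.

Lemma cost_node_uninformative v (ch : point k -> dtree k) p m s :
  ~~ agree_below v p m -> agree_below s p m ->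
  cost (ch (hard_map p v)) s <= cost (Node v ch) s.
Proof.
move=> /agree_below_first_diff [j /and3P [lt_jm Hvp ne_j]] Hs.
rewrite /cost /fails /=.
have -> : hard_map s v = hard_map p v; last by lia.
apply: (@hard_map_prefix _ _ _ _ j).
- apply: agree_below_trans (agree_below_le (ltnW lt_jm) Hs) _.
  by rewrite agree_belowC.
- by rewrite (agree_below_eq Hs lt_jm) eq_sym.
- exact: agree_below_le Hs.
Qed.

Lemma cost_lower_bound_node v (ch : point k -> dtree k) :
  (forall y, cost_lower_bound (ch y)) -> cost_lower_bound (Node v ch).
Proof.
move=> IH p m le_mk; case Hvp: (agree_below v p m).
  rewrite (eq_bigl (fun s => agree_below s v m)); first exact: cost_node_informative.
  by move=> s; apply/idP/idP => H; apply: agree_below_trans H _; rewrite // agree_belowC.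
apply: leq_trans (IH (hard_map p v) p m le_mk) _.
by apply: leq_sum => s; apply: cost_node_uninformative; rewrite Hvp.
Qed.

Lemma sum_cost_ge t : k * expn 2 k <= \sum_s cost t s.
Proof.
have: cost_lower_bound t.
  elim: t => [x | v ch IH]; first exact: cost_lower_bound_leaf.
  exact: cost_lower_bound_node.
move=> /(_ [ffun => false] 0 (leq0n k)); rewrite subn0.
by under eq_bigl => s do rewrite agree_below0.
Qed.

End DecisionTreeLowerBound.

Section KleeneIteration.
Variable k : nat.
Implicit Types (x y : point k) (n : nat).

Fixpoint kleene_tree n x : dtree k :=
  if n is n'.+1 then Node x (fun y => if y == x then Leaf x else kleene_tree n' y)
  else Leaf x.

Definition weight x := #|[set i | x i]|.

Lemma weight_lt x y : le_pt x y -> x != y -> weight x < weight y.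
Proof.
move=> /le_ptP le_xy ne_xy; apply: proper_card; rewrite properEneq.
apply/andP; split; last by apply/subsetP => i; rewrite !inE; apply: le_xy.
apply: contra ne_xy => /eqP E; apply/eqP/ffunP => i.
by have := congr1 (fun X : {set 'I_k} => i \in X) E; rewrite /= !inE.
Qed.

Lemma le_pt_full x y : k <= weight x -> le_pt x y -> y = x.
Proof.
move=> full_x /le_ptP le_xy.
have all_x i : x i.
  have: [set i | x i] = setT by apply/eqP; rewrite eqEcard subsetT cardsT card_ord.
  by move/setP/(_ i); rewrite !inE.
by apply/ffunP => i; rewrite all_x le_xy.
Qed.

Lemma kleene_tree_correct (f : point k -> point k) n x :
  monotone_map f -> le_pt x (f x) -> k <= n + weight x ->
  is_fixed_point f (run (kleene_tree n x) f) /\ nqueries (kleene_tree n x) f <= n.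
Proof.
move=> mono_f; elim: n x => [|n IH] x le_xfx le_k /=.
  by split => //; apply/eqP; apply: le_pt_full le_xfx.
case: eqP => [fx_x | /eqP ne_fx] /=; first by split => //; apply/eqP.
have := weight_lt le_xfx; rewrite eq_sym => /(_ ne_fx) lt_w.
by have [] := IH (f x) (mono_f _ _ le_xfx) ltac:(lia).
Qed.

Definition kleene_solver : dtree k := kleene_tree k [ffun => false].

Lemma kleene_solver_correct (f : point k -> point k) : monotone_map f ->
  is_fixed_point f (run kleene_solver f) /\ nqueries kleene_solver f <= k.
Proof.
move=> mono_f; apply: kleene_tree_correct (leq_addr _ _) => //.
by apply/le_ptP => i; rewrite ffunE.
Qed.

End KleeneIteration.

Local Open Scope ring_scope.

Lemma ler_wsum (T : Type) (A : seq (R * T)) (F G : T -> R) :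
  all (fun p => 0 <= p.1) A -> (forall x, F x <= G x) ->
  \sum_(p <- A) p.1 * F p.2 <= \sum_(p <- A) p.1 * G p.2.
Proof.
move=> A_ge0 le_FG; elim: A A_ge0 => [|p A IH]; first by rewrite !big_nil.
by rewrite !big_cons => /andP [p_ge0 /IH]; apply: lerD; apply: ler_wpM2l.
Qed.

Lemma exists_ge_average (D : realDomainType) (T : finType) (F : T -> D) c :
  (0 < #|T|)%nat -> #|T|%:R * c <= \sum_x F x -> exists x, c <= F x.
Proof.
move=> /card_gt0P [x0 _] le_sum; apply/existsP; apply: contraLR le_sum.
move=> /existsPn lt_F; rewrite -ltNge mulr_natl -sumr_const.
apply: ltr_sum => [|x _]; last by rewrite ltNge lt_F.
by apply/hasP; exists x0; rewrite ?mem_index_enum.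
Qed.

Section RandomizedLowerBound.
Variables (k : nat) (A : rand_alg k).
Hypothesis A_distr : is_distribution A.

Definition expected_cost (s : point k) : R := \sum_(p <- A) p.1 * (cost p.2 s)%:R.

Lemma expected_costE s : expected_cost s =
  2 * expected_queries A (hard_map s) + k.+1%:R * (1 - success_prob A (hard_map s)).
Proof.
have fail_prob : 1 - success_prob A (hard_map s) = \sum_(p <- A) p.1 * (fails p.2 s)%:R.
  have [_ sum1] := A_distr; rewrite -{1}sum1 /success_prob -sumrB.
  apply: eq_bigr => p _; rewrite /fails.
  by case: is_fixed_point; rewrite /= ?mulr1 ?mulr0 ?subrr ?subr0.
rewrite fail_prob /expected_queries !mulr_sumr -big_split; apply: eq_bigr => p _ /=.
by rewrite /cost natrD !natrM mulrDr !(mulrCA p.1).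
Qed.

Lemma sum_expected_cost_ge : (k * expn 2 k)%:R <= \sum_s expected_cost s.
Proof.
have [A_ge0 sum1] := A_distr.
rewrite /expected_cost exchange_big /=.
under [X in _ <= X]eq_bigr => p _ do rewrite -mulr_sumr -natr_sum.
have -> : (k * expn 2 k)%:R = \sum_(p <- A) p.1 * (k * expn 2 k)%:R :> R.
  by rewrite -mulr_suml sum1 mul1r.
apply: (ler_wsum (F := fun=> (k * expn 2 k)%:R) (G := fun t => (\sum_s cost t s)%:R)).
  exact: A_ge0.
by move=> t; rewrite ler_nat sum_cost_ge.
Qed.

Lemma exists_expected_cost_ge : exists s, k%:R <= expected_cost s.
Proof.
apply: exists_ge_average; first by rewrite card_ffun card_bool expn_gt0.
by rewrite card_ffun card_bool card_ord -natrM mulnC sum_expected_cost_ge.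
Qed.

Lemma expected_queries_ge0 f : 0 <= expected_queries A f.
Proof.
have [A_ge0 _] := A_distr.
have := ler_wsum (F := fun=> 0) (G := fun t => (nqueries t f)%:R) A_ge0.
by rewrite big1 => [-> // t | p _]; rewrite ?mulr0.
Qed.

End RandomizedLowerBound.

Lemma rand_solves_lower_bound k (A : rand_alg k) : rand_solves A ->
  exists f, monotone_map f /\ 1 / 4 * k%:R <= expected_queries A f.
Proof.
move=> [A_distr succ]; have [s] := exists_expected_cost_ge A_distr.
rewrite expected_costE //; set E := expected_queries _ _; set P := success_prob _ _.
move=> cost_s; exists (hard_map s); split; first exact: hard_map_monotone.
have E_ge0 : 0 <= E by apply: expected_queries_ge0.
have succ_s : 9 / 10 <= P := succ _ (hard_map_monotone s).
have fail_s : k.+1%:R * (1 - P) <= k.+1%:R * (1 / 10) by apply: ler_wpM2l => //; lra.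
have k1 : k.+1%:R = k%:R + 1 :> R by rewrite -addn1 natrD.
have [k0 | k_ge1] : k%:R = 0 :> R \/ 1 <= k%:R :> R.
  by case: (k) => [|k']; [left | right; rewrite ler1n].
all: rewrite -/E; lra.
Qed.

Lemma rand_solves_dirac k (t : dtree k) : det_solves t -> rand_solves [:: (1, t)].
Proof.
move=> t_solves; split; first by split; rewrite /= ?ler01 ?big_seq1.
by move=> f mono_f; rewrite /success_prob big_seq1 mul1r (t_solves f mono_f) /=; lra.
Qed.

Lemma expected_queries_dirac k (t : dtree k) f :
  expected_queries [:: (1, t)] f = (nqueries t f)%:R.
Proof. by rewrite /expected_queries big_seq1 mul1r. Qed.

Theorem corollary2 :
  exists c1 c2 : R, 0 < c1 /\ c1 <= c2 /\
  forall k : nat,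
    (* deterministic query complexity <= c2 k *)
    (exists t : dtree k, det_solves t /\
       forall f, monotone_map f -> (nqueries t f)%:R <= c2 * k%:R) /\
    (* deterministic query complexity >= c1 k *)
    (forall t : dtree k, det_solves t ->
       exists f, monotone_map f /\ c1 * k%:R <= (nqueries t f)%:R) /\
    (* randomized query complexity <= c2 k *)
    (exists A : rand_alg k, rand_solves A /\
       forall f, monotone_map f -> expected_queries A f <= c2 * k%:R) /\
    (* randomized query complexity >= c1 k *)
    (forall A : rand_alg k, rand_solves A ->
       exists f, monotone_map f /\ c1 * k%:R <= expected_queries A f).
Proof.
exists (1 / 4), 1; do 2![split; first lra] => k.
have kleene_solves : det_solves (kleene_solver k).
  by move=> f /kleene_solver_correct [].
have kleene_queries f :
    monotone_map f -> (nqueries (kleene_solver k) f)%:R <= 1 * k%:R :> R.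
  by move=> /kleene_solver_correct [_]; rewrite mul1r ler_nat.
split; first by exists (kleene_solver k); split.
split.
  move=> t t_solves; have [f] := rand_solves_lower_bound (rand_solves_dirac t_solves).
  by rewrite expected_queries_dirac; exists f.
split; last exact: rand_solves_lower_bound.
exists [:: (1, kleene_solver k)]; split; first exact: rand_solves_dirac.
by move=> f /kleene_queries; rewrite expected_queries_dirac.
Qed.
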